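(* Let $G=(V,E)$ be a finite connected graph and $A$ an irreducible, lazy transition matrix on $V$, with $E_A=\{(i,j)\in V\times V:A(i,j)>0\}$. Suppose $x\in S^{(i)}$ and $v\in V$. Then there exist a finite integer $\sigma(i)$ and a sequence $(i_1=v,i_2,\dots,i_{\sigma(i)}=i)\in V^{\sigma(i)}$ with $(i_j,i_{j+1})\in E_A$ for all $j$, such that $$T_{i_{\sigma(i)}}\cdots T_{i_1}x\in S^{(i)}.$$
   Context: $S=(-\mathbb{N}_0)^V$ and $S^{(i)}=\{x\in S:x_i=0\}$. For $x\in S$ and $i\in V$, $T_ix\in S$ is obtained by first setting $x'_i=\max\{x_k:\operatorname{dist}(k,i)\le1\}+1$, $x'_j=x_j$ for $j\ne i$ (dist the graph distance in $G$), and then $(T_ix)_j=x'_j-\max_kx'_k$. Irreducible: for all $v\neq v'$ there is $s$ with $A^s(v,v')>0$; lazy: $A(v,v)>0$ for all $v$. *)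

From mathcomp Require Import all_boot all_order all_algebra.
Set Implicit Arguments. Unset Strict Implicit. Unset Printing Implicit Defensive.
Import Order.TTheory GRing.Theory Num.Theory.
Local Open Scope ring_scope.

Definition simple_graph (V : finType) (e : rel V) : Prop :=
  symmetric e /\ irreflexive e.

Definition graph_connected (V : finType) (e : rel V) : Prop :=
  forall u w : V, connect e u w.

Definition close (V : finType) (e : rel V) (k i : V) : bool := (k == i) || e k i.

Definition inS (V : finType) (x : V -> int) : Prop := forall j, x j <= 0.
Definition inSi (V : finType) (i : V) (x : V -> int) : Prop := inS x /\ x i = 0.

Definition Tpre (V : finType) (e : rel V) (i : V) (x : V -> int) : V -> int :=
  fun j => if j == i then (\big[Num.max/x i]_(k | close e k i) x k) + 1 else x j.

Definition Tmap (V : finType) (e : rel V) (i : V) (x : V -> int) : V -> int :=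
  let x' := Tpre e i x in
  fun j => x' j - \big[Num.max/x' i]_k x' k.

Fixpoint mpow (R : nzRingType) (V : finType) (A : V -> V -> R) (s : nat)
  : V -> V -> R :=
  match s with
  | 0 => fun u w => if u == w then 1 else 0
  | s'.+1 => fun u w => \sum_k mpow A s' u k * A k w
  end.

Definition transition_matrix (R : realFieldType) (V : finType) (A : V -> V -> R)
  : Prop := (forall u w, 0 <= A u w) /\ (forall u, \sum_w A u w = 1).

Definition irreducible (R : realFieldType) (V : finType) (A : V -> V -> R)
  : Prop := forall u w, u != w -> exists s, 0 < mpow A s u w.

Definition lazy_mx (R : realFieldType) (V : finType) (A : V -> V -> R) : Prop :=
  forall u, 0 < A u u.

Definition EA (R : realFieldType) (V : finType) (A : V -> V -> R) : rel V :=
  fun u w => 0 < A u w.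

(* T_{i_sigma} ... T_{i_1} x for the sequence v :: s *)
Definition Tseq (V : finType) (e : rel V) (v : V) (s : seq V) (x : V -> int)
  : V -> int := foldl (fun y k => Tmap e k y) (Tmap e v x) s.

From mathcomp Require Import all_boot all_order all_algebra zify.
Import Order.TTheory GRing.Theory Num.Theory.
Local Open Scope ring_scope.

Set Implicit Arguments.
Unset Strict Implicit.
Unset Printing Implicit Defensive.

(* A positive entry of some power A^s witnesses an E_A-walk, so irreducibility
   yields an E_A-path from v to i; along it every T_k lands in S.  Laziness
   then lets the path idle at i, and each application of T_i to a point of S
   raises the i-th coordinate by at least one until it reaches 0, where it
   stays: the renormalising maximum exceeds the new value of coordinate i by
   at most its positive part, because all other coordinates are <= 0. *)

Section RenormalisedMap.

Variables (V : finType) (e : rel V).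

Lemma Tmap_inS (i : V) (y : V -> int) : inS (Tmap e i y).
Proof. by move=> j; rewrite /Tmap subr_le0; apply: le_bigmax. Qed.

Lemma Tseq_inS (v : V) (s : seq V) (x : V -> int) : inS (Tseq e v s x).
Proof.
by case/lastP: s => [|s k]; rewrite /Tseq ?foldl_rcons; apply: Tmap_inS.
Qed.

Lemma Tmap_ge (i : V) (y : V -> int) :
  inS y -> Num.min 0 (y i + 1) <= Tmap e i y i.
Proof.
move=> Sy; set m := \big[Num.max/y i]_(k | close e k i) y k.
have le_yi_m : y i <= m by apply: le_bigmax_cond; rewrite /close eqxx.
have Tpre_i : Tpre e i y i = m + 1 by rewrite /Tpre eqxx.
have max_le : \big[Num.max/Tpre e i y i]_k Tpre e i y k <= Num.max (m + 1) 0.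
  apply/bigmax_leP; split=> [|k _]; first by rewrite Tpre_i le_max lexx.
  by rewrite /Tpre; case: eqP => _; rewrite le_max ?lexx ?Sy ?orbT.
move: max_le; rewrite /Tmap Tpre_i; lia.
Qed.

Lemma iter_Tmap_inSi (i : V) (k : nat) (y : V -> int) :
  inS y -> 0 <= y i + k%:Z -> inSi i (iter k (Tmap e i) y).
Proof.
elim: k y => [|k IHk] y Sy reach.
  by split=> //=; apply/eqP; rewrite eq_le Sy; lia.
rewrite iterSr; apply: IHk; first exact: Tmap_inS.
by have := Tmap_ge i Sy; lia.
Qed.

Lemma foldl_Tmap_nseq (i : V) (k : nat) (y : V -> int) :
  foldl (fun z j => Tmap e j z) y (nseq k i) = iter k (Tmap e i) y.
Proof. by elim: k y => [|k IHk] y //=; rewrite IHk -iterSr. Qed.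

End RenormalisedMap.

Section NonnegativeMatrix.

Variables (R : realFieldType) (V : finType) (A : V -> V -> R).
Hypothesis A_ge0 : forall u w, 0 <= A u w.

Lemma mpow_eq0 (s : nat) (u w : V) :
  ~~ connect (EA A) u w -> mpow A s u w = 0.
Proof.
elim: s w => [|s IHs] w /= not_uw.
  by case: eqP not_uw => // ->; rewrite connect0.
apply: big1 => k _; have [uk|not_uk] := boolP (connect (EA A) u k); last first.
  by rewrite IHs // mul0r.
have : ~~ EA A k w.
  by apply: contra not_uw => kw; apply: connect_trans uk (connect1 kw).
rewrite /EA -leNgt => Akw_le0.
have -> : A k w = 0 by apply/le_anti; rewrite Akw_le0 A_ge0.
by rewrite mulr0.
Qed.

Lemma irreducible_connect : irreducible A -> forall u w, connect (EA A) u w.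
Proof.
move=> irrA u w; have [->|neq_uw] := eqVneq u w; first exact: connect0.
have [s As_gt0] := irrA u w neq_uw.
apply/negPn/negP => /(mpow_eq0 s) As_eq0.
by rewrite As_eq0 ltxx in As_gt0.
Qed.

Lemma lazy_path_nseq : lazy_mx A -> forall (i : V) k, path (EA A) i (nseq k i).
Proof. by move=> lazyA i; elim=> //= k ->; rewrite /EA lazyA. Qed.

End NonnegativeMatrix.

Theorem mainTheorem9 (R : realFieldType) (V : finType) (e : rel V)
  (A : V -> V -> R) (i v : V) (x : V -> int) :
  simple_graph e -> graph_connected e ->
  transition_matrix A -> irreducible A -> lazy_mx A ->
  inSi i x ->
  exists s : seq V,
    [/\ path (EA A) v s, last v s = i & inSi i (Tseq e v s x)].
Proof.
move=> _ _ [A_ge0 _] irrA lazyA _.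
have /connectP[p vp_path last_p] := irreducible_connect A_ge0 irrA v i.
set y := Tseq e v p x; have Sy : inS y := Tseq_inS e v p x.
exists (p ++ nseq `|y i|%N i); split.
- by rewrite cat_path vp_path -last_p (lazy_path_nseq lazyA).
- by rewrite last_cat -last_p; elim: `|y i|%N.
- rewrite /Tseq foldl_cat -/(Tseq e v p x) -/y foldl_Tmap_nseq.
  by apply: iter_Tmap_inSi => //; rewrite abszE ler0_norm ?Sy // addrN.
Qed.
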